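(* Let $\mathbf q=(q_1,\dots,q_n)\in\mathbb Z_{\ge1}^n$ satisfy $1+\sum_{i=1}^n q_i=\mathrm{lcm}(\mathbf q)-1$ (equivalently, $\mathrm{rsn}(\mathbf q)=1$ and $\ell(\mathrm{rs}(\mathbf q))=1$), and let $\mathrm{rs}(\mathbf q)=(1,q_1,\dots,q_n)\in\mathbb Z_{\ge1}^{n+1}$. Then $w(\mathbf q,b)=w(\mathrm{rs}(\mathbf q),b)$ for all integers $0\le b\le\sum_{i=1}^n q_i$, and consequently $$h^*(\Delta_{(1,\mathrm{rs}(\mathbf q))};z)=h^*(\Delta_{(1,\mathbf q)};z)+z^{n+1}.$$
   Context: For $\mathbf p=(p_1,\dots,p_N)\in\mathbb Z_{\ge1}^N$ (entries in weakly increasing order), let $\Delta_{(1,\mathbf p)}=\mathrm{conv}\{e_1,\dots,e_N,-\sum_{i=1}^N p_ie_i\}\subset\mathbb R^N$, and define for integers $b$ $$w(\mathbf p,b)=b-\sum_{i=1}^N\left\lfloor\frac{p_i b}{1+p_1+\cdots+p_N}\right\rfloor.$$ It is known that the $h^*$-polynomial of $\Delta_{(1,\mathbf p)}$ equals $\sum_{b=0}^{p_1+\cdots+p_N}z^{w(\mathbf p,b)}$, where the $h^*$-polynomial of a lattice polytope $P$ is the numerator $h^*(P;z)$ in $\sum_{t\ge0}|tP\cap\mathbb Z^N|z^t=h^*(P;z)/(1-z)^{\dim P+1}$. $\mathrm{lcm}(\mathbf q)$ is the least common multiple of the entries of $\mathbf q$. $\Delta_{(1,\mathbf p)}$ is reflexive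 iff $p_i\mid 1+\sum_jp_j$ for all $i$; $\mathrm{rsn}(\mathbf q)$ is the least $k\ge0$ such that prepending $k$ ones to $\mathbf q$ gives a reflexive simplex, $\mathrm{rs}(\mathbf q)$ is $\mathbf q$ with $\mathrm{rsn}(\mathbf q)$ ones prepended, and for reflexive $\mathbf p$, $\ell(\mathbf p)$ is defined by $1+\sum_i p_i=\ell(\mathbf p)\,\mathrm{lcm}(\mathbf p)$. *)

From mathcomp Require Import all_boot all_order all_algebra.
From mathcomp Require Import boolp classical_sets cardinality.
Set Implicit Arguments. Unset Strict Implicit. Unset Printing Implicit Defensive.
Import Order.TTheory GRing.Theory Num.Theory.

Definition lcm_seq (q : seq nat) : nat := \big[lcmn/1%N]_(x <- q) x.

Definition w (p : seq nat) (b : nat) : int :=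
  (b%:Z - \sum_(x <- p) ((x * b) %/ (1 + sumn p))%N%:Z)%R.

(* rs(q) when rsn(q) = 1: prepend one entry equal to 1. *)
Definition rs1 (q : seq nat) : seq nat := 1%N :: q.

(* Vertices of Delta_(1,p) in Q^N (N = size p), indexed by option 'I_N:
   Some k is e_k, None is - sum_i p_i e_i. *)
Definition vtx (p : seq nat) (j : option 'I_(size p)) (i : 'I_(size p)) : rat :=
  match j with
  | Some k => ((i == k)%:R)%R
  | None => (- (nth 0%N p i)%:R)%R
  end.

Definition in_dilate (p : seq nat) (t : nat) (x : 'I_(size p) -> int) : Prop :=
  exists lam : option 'I_(size p) -> rat,
    (forall j, 0 <= lam j)%R /\
    (\sum_j lam j = t%:R)%R /\
    (forall i, (x i)%:~R = \sum_j lam j * @vtx p j i)%R.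

Definition lattice_pts (p : seq nat) (t : nat) : set ('I_(size p) -> int) :=
  [set x | @in_dilate p t x].

(* h is the h^*-polynomial of Delta_(1,p) (which has dimension N = size p):
   sum_t |t Delta ∩ Z^N| z^t = h(z) / (1-z)^(N+1), i.e. coefficientwise
   |t Delta ∩ Z^N| = sum_j h_j [z^(t-j)] (1-z)^-(N+1)
                   = sum_{j <= t} h_j * binom(t - j + N, N). *)
Definition is_hstar (p : seq nat) (h : {poly int}) : Prop :=
  forall t : nat, exists k : nat,
    (@lattice_pts p t #= `I_k)%card /\
    (k%:Z = \sum_(j < size h) h`_j *
              (if (j <= t)%N then 'C(t - j + size p, size p) else 0%N)%:Z)%R.

From mathcomp Require Import all_boot all_order all_algebra.
From mathcomp Require Import boolp classical_sets cardinality.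
From mathcomp Require Import zify ring.
Import Order.TTheory GRing.Theory Num.Theory.
Local Open Scope ring_scope.

(* Put D = 1 + |q|, so D + 1 = lcm(q) is divisible by every q_i.  For
   b < D the floors of q_i b / D and q_i b / (D + 1) agree (divn_dvd_succ) and
   the new entry 1 contributes floor(b / (D + 1)) = 0; the one extra index
   b = D of rs(q) has weight D - sum_i (q_i - 1) = n + 1 (divn_mul_succ).

   For an arbitrary p, the lattice points of t Delta_(1,p)
   are in bijection with the pairs (b, y), 0 <= b < 1 + |p|, y in N^N, with
   w(p, b) + |y| <= t (param_point); counting these shows that
   H_p(z) = sum_b z^(w(p,b)) is an h^*-polynomial of Delta_(1,p), and since the
   lattice-point counts determine the coefficients (a unitriangular system) it
   is the only one.  The theorem then reduces to H_(rs q) = H_q + z^(n+1). *)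

Definition denom (p : seq nat) : nat := (1 + sumn p)%N.

Lemma denom_gt0 (p : seq nat) : (0 < denom p)%N.
Proof. by []. Qed.

Definition floor_sum (p : seq nat) (u : nat) : nat :=
  (\sum_(i < size p) (nth 0%N p i * u) %/ denom p)%N.

Definition wnat (p : seq nat) (b : nat) : nat := (b - floor_sum p b)%N.

Lemma sumn_ord (p : seq nat) : sumn p = (\sum_(i < size p) nth 0%N p i)%N.
Proof. by rewrite sumnE (big_nth 0%N) big_mkord. Qed.

Lemma floor_sum_seq (p : seq nat) (u : nat) :
  (\sum_(x <- p) (x * u) %/ denom p)%N = floor_sum p u.
Proof. by rewrite (big_nth 0%N) big_mkord. Qed.

(* Since sum_i p_i < denom p, the floors add up to at most u. *)
Lemma floor_sum_le (p : seq nat) (u : nat) : (floor_sum p u <= u)%N.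
Proof.
have sum_le : (floor_sum p u * denom p <= sumn p * u)%N.
  rewrite /floor_sum big_distrl /= sumn_ord big_distrl /=.
  by apply: leq_sum => i _; apply: leq_divM.
rewrite -(leq_pmul2r (denom_gt0 p)); apply: (leq_trans sum_le).
by rewrite mulnC leq_mul2l /denom leq_addl orbT.
Qed.

Lemma floor_sum_shift (p : seq nat) (k u : nat) :
  floor_sum p (k * denom p + u) = (k * sumn p + floor_sum p u)%N.
Proof.
rewrite /floor_sum sumn_ord big_distrr -big_split /=; apply: eq_bigr => i _.
by rewrite mulnDr mulnA divnMDl ?denom_gt0 // mulnC.
Qed.

Lemma floor_sum_decomp (p : seq nat) (u : nat) :
  (floor_sum p u + u %/ denom p + wnat p (u %% denom p) = u)%N.
Proof.
rewrite {1 4}(divn_eq u (denom p)) floor_sum_shift /wnat.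
have := floor_sum_le p (u %% denom p); rewrite /denom; lia.
Qed.

Lemma w_wnat (p : seq nat) (b : nat) : w p b = (wnat p b)%:Z.
Proof.
rewrite /w /wnat -/(denom p) -(big_morph Posz PoszD (erefl _)) floor_sum_seq.
by rewrite subzn ?floor_sum_le.
Qed.

(* If x divides L + 1 and b < L, then floor(x b / L) = floor(x b / (L + 1)):
   with L + 1 = d x both sides equal floor(b / d). *)
Lemma divn_dvd_succ (x L b : nat) :
  (0 < x)%N -> (x %| L.+1)%N -> (b < L)%N -> ((x * b) %/ L = (x * b) %/ L.+1)%N.
Proof.
move=> x_gt0 /dvdnP [d L_eq] b_lt; rewrite L_eq [(d * x)%N]mulnC divnMl //.
have d_gt0 : (0 < d)%N by case: d L_eq => //=; lia.
have b_eq := divn_eq b d; have r_lt := ltn_pmod b d_gt0.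
move: (b %/ d)%N (b %% d)%N b_eq r_lt => m r b_eq r_lt.
have L_pos : (0 < L)%N by lia.
apply/eqP; rewrite eqn_leq; apply/andP; split; last by rewrite leq_divRL; nia.
rewrite -ltnS ltn_divLR //.
have [r_lt'|r_eq] : (r + 1 < d \/ r + 1 = d)%N by lia.
- nia.
- nia.
Qed.

Lemma divn_mul_succ (x L : nat) : (0 < x <= L.+1)%N -> ((x * L) %/ L.+1 = x - 1)%N.
Proof.
move=> /andP [x_gt0 x_le]; apply/eqP; rewrite eqn_leq; apply/andP; split.
  by rewrite -ltnS ltn_divLR; nia.
by rewrite leq_divRL; nia.
Qed.

Lemma dvdn_lcm_seq (q : seq nat) (x : nat) : x \in q -> (x %| lcm_seq q)%N.
Proof.
elim: q => // y q IH; rewrite inE /lcm_seq big_cons => /orP [/eqP ->|/IH x_dvd].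
  exact: dvdn_lcml.
exact: dvdn_trans x_dvd (dvdn_lcmr _ _).
Qed.

Lemma sumn_pred (q : seq nat) : all (fun x => 0 < x)%N q ->
  (\sum_(x <- q) (x - 1) + size q = sumn q)%N.
Proof.
elim: q => [|y q IH] /=; first by rewrite big_nil.
by move=> /andP [y_gt0 /IH <-]; rewrite big_cons; lia.
Qed.

Lemma ge0_mul_add_divn (D : nat) (x : int) (a : nat) : (0 < D)%N ->
  (0 <= D%:Z * x + a%:Z) = (0 <= x + (a %/ D)%N%:Z).
Proof.
move=> D_gt0; have a_eq := divn_eq a D; have r_lt := ltn_pmod a D_gt0.
by apply/idP/idP; nia.
Qed.

Definition tuple_sum {N t : nat} (y : N.-tuple 'I_t.+1) : nat := (\sum_(i <- y) i)%N.

Lemma tuple_sum_tnth (N t : nat) (y : N.-tuple 'I_t.+1) :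
  tuple_sum y = (\sum_(i < N) tnth y i)%N.
Proof. by rewrite /tuple_sum big_tuple. Qed.

Lemma nat_sum_ge {I : finType} (F : I -> nat) (i : I) : (F i <= \sum_j F j)%N.
Proof. by rewrite (bigD1 i) //= leq_addr. Qed.

(* The tuples y in [0, t]^N with |y| <= m <= t are counted by binom(m + N, N)
   (stars and bars, card_partial_ord_partitions after shrinking the entry bound). *)
Lemma card_tuple_sum_le (N t m : nat) : (m <= t)%N ->
  #|[set y : N.-tuple 'I_t.+1 | (tuple_sum y <= m)%N]| = 'C(m + N, N).
Proof.
move=> m_le; have m_lt : (m.+1 <= t.+1)%N by [].
pose widen (y : N.-tuple 'I_m.+1) : N.-tuple 'I_t.+1 := map_tuple (widen_ord m_lt) y.
have widen_inj : injective widen.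
  have widen_ord_inj : injective (widen_ord m_lt) by move=> i j [/val_inj].
  by move=> y1 y2 /(congr1 val) /= /(inj_map widen_ord_inj) /val_inj.
have entry_le (y : N.-tuple 'I_t.+1) i : (tuple_sum y <= m)%N -> (tnth y i < m.+1)%N.
  move=> y_le; rewrite ltnS (leq_trans _ y_le) // tuple_sum_tnth.
  exact: (nat_sum_ge (fun j => tnth y j : nat)).
rewrite addnC -card_partial_ord_partitions -(card_imset _ widen_inj).
apply: eq_card => y; rewrite inE; apply/idP/imsetP => [y_le|[y' + ->]].
  exists (map_tuple (fun i : 'I_t.+1 => inord i : 'I_m.+1) y).
    rewrite inE -/(tuple_sum _) tuple_sum_tnth (eq_bigr (fun j => tnth y j : nat)).
      by rewrite -tuple_sum_tnth.
    by move=> j _; rewrite tnth_map inordK ?entry_le.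
  apply: eq_from_tnth => j; rewrite !tnth_map; apply: val_inj => /=.
  by rewrite inordK ?entry_le.
by rewrite inE /tuple_sum /widen /= big_map.
Qed.

Local Open Scope classical_set_scope.

Lemma card_finset {T : finType} (A : {set T}) :
  ([set z | z \in A] #= `I_#|A|)%card.
Proof.
have -> : [set z | z \in A] = (@enum_val T (mem A)) @` [set: 'I_#|A|].
  apply/seteqP; split => [x /= x_in|x [i _ <-]]; last exact: enum_valP.
  by exists (enum_rank_in x_in x) => //; exact: enum_rankK_in.
apply: card_eq_trans (inj_card_eq _) (card_esym card_II).
by move=> i j _ _; exact: enum_val_inj.
Qed.

Lemma sum_option (R : nmodType) (I : finType) (F : option I -> R) :
  \sum_j F j = F None + \sum_i F (Some i).
Proof.
rewrite (bigD1 None) //=; congr (_ + _).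
rewrite (reindex_omap Some id) //=; last by case.
by apply: eq_bigl => i; rewrite eqxx.
Qed.

(* ehr_coef N t j = [z^t] z^j / (1 - z)^(N+1) = binom(t - j + N, N) for j <= t. *)
Definition ehr_coef (N t j : nat) : int :=
  (if (j <= t)%N then 'C(t - j + N, N) else 0%N)%:Z.

Lemma ehr_sum_widen (N t : nat) (h : {poly int}) (M : nat) : (size h <= M)%N ->
  \sum_(j < size h) h`_j * ehr_coef N t j = \sum_(j < M) h`_j * ehr_coef N t j.
Proof.
move=> size_le; rewrite (big_ord_widen M (fun j => h`_j * ehr_coef N t j)) //.
rewrite big_mkcond; apply: eq_bigr => j _; case: ltnP => // j_ge.
by rewrite nth_default // mul0r.
Qed.

(* A polynomial is determined by its Ehrhart-type sums: the system
   t |-> sum_j h_j ehr_coef N t j is triangular with unit diagonal. *)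
Lemma ehr_sum_inj (N : nat) (h g : {poly int}) :
  (forall t, \sum_(j < size h) h`_j * ehr_coef N t j =
             \sum_(j < size g) g`_j * ehr_coef N t j) ->
  h = g.
Proof.
move=> sums_eq; set M := maxn (size h) (size g).
have diff0 t : \sum_(j < M) (h`_j - g`_j) * ehr_coef N t j = 0.
  under eq_bigr do rewrite mulrBl.
  rewrite sumrB -(ehr_sum_widen _ _ _ _ (leq_maxl _ _)).
  by rewrite -(ehr_sum_widen _ _ _ _ (leq_maxr _ _)) sums_eq subrr.
apply/polyP => j; elim/ltn_ind: j => j IH.
have [M_le|j_lt] := leqP M j.
  by rewrite !nth_default // (leq_trans _ M_le) // ?leq_maxl ?leq_maxr.
have := diff0 j; rewrite (bigD1 (Ordinal j_lt)) //= big1.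
  rewrite /ehr_coef leqnn subnn add0n binn mulr1 addr0 => /eqP.
  by rewrite subr_eq0 => /eqP.
move=> i i_neq; have [i_lt|j_le] := ltnP i j; first by rewrite IH // subrr mul0r.
have j_lt' : (j < i)%N.
  rewrite ltn_neqAle j_le andbT; apply: contraNneq i_neq => j_eq.
  by apply/eqP/val_inj; rewrite /= j_eq.
by rewrite /ehr_coef leqNgt j_lt' mulr0.
Qed.

Lemma wnat_lt (p : seq nat) (b : 'I_(denom p)) : (wnat p b < denom p)%N.
Proof. exact: leq_ltn_trans (leq_subr _ _) (ltn_ord b). Qed.

Definition hpoly (p : seq nat) : {poly int} :=
  \poly_(j < denom p) (\sum_(b < denom p) (wnat p b == j) : nat)%:Z.

Lemma ehr_sum_hpoly (N t : nat) (p : seq nat) :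
  \sum_(j < size (hpoly p)) (hpoly p)`_j * ehr_coef N t j =
  \sum_(b < denom p) ehr_coef N t (wnat p b).
Proof.
rewrite (ehr_sum_widen _ _ _ _ (size_poly _ _)).
under eq_bigr do rewrite coef_poly ltn_ord (big_morph Posz PoszD (erefl _)) mulr_suml.
rewrite exchange_big /=; apply: eq_bigr => b _.
rewrite (bigD1 (Ordinal (wnat_lt p b))) //= eqxx mul1r big1 ?addr0 //.
move=> j j_neq; case: eqP => [w_eq|_]; last by rewrite mul0r.
by case/eqP: j_neq; apply: val_inj; rewrite /= w_eq.
Qed.

Lemma hpolyE (p : seq nat) : hpoly p = \sum_(b < denom p) 'X^(wnat p b).
Proof.
apply/polyP => j; rewrite coef_poly coef_sum.
under [RHS]eq_bigr do rewrite coefXn eq_sym natz.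
rewrite -(big_morph Posz PoszD (erefl _)); case: ltnP => // j_ge.
rewrite big1 // => b _; case: eqP => // w_eq.
by have := wnat_lt p b; rewrite w_eq ltnNge j_ge.
Qed.

Section LatticePoints.

Variable p : seq nat.

Lemma vtx_comb (lam : option 'I_(size p) -> rat) (i : 'I_(size p)) :
  \sum_j lam j * @vtx p j i = lam (Some i) - lam None * (nth 0%N p i)%:R.
Proof.
rewrite sum_option /= addrC mulrN; congr (_ - _).
rewrite (bigD1 i) //= eqxx mulr1 big1 ?addr0 // => k k_neq.
by rewrite eq_sym (negbTE k_neq) mulr0.
Qed.

Lemma vtx_comb_total (lam : option 'I_(size p) -> rat) :
  \sum_j lam j = lam None * (denom p)%:R + \sum_i \sum_j lam j * @vtx p j i.
Proof.
under [X in _ = _ + X]eq_bigr do rewrite vtx_comb.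
rewrite sum_option sumrB -mulr_sumr -natr_sum -sumn_ord /denom natrD; ring.
Qed.

(* Integral description of t Delta_(1,p): with s = sum_i x_i, x lies in
   t Delta_(1,p) iff s <= t and denom p * x_i + p_i (t - s) >= 0 for every i;
   the weight of the vertex -sum_i p_i e_i is then (t - s) / denom p. *)
Lemma in_dilateP (t : nat) (x : 'I_(size p) -> int) :
  @in_dilate p t x <-> (\sum_i x i <= t%:Z) /\
    (forall i, 0 <= (denom p)%:Z * x i + (nth 0%N p i)%:Z * (t%:Z - \sum_i x i)).
Proof.
set s := \sum_i x i; split.
  move=> [lam [lam_ge0 [lam_sum lam_x]]].
  have slack : (t%:Z - s)%:~R = lam None * (denom p)%:R :> rat.
    rewrite intrB rmorph_sum (eq_bigr _ (fun i _ => lam_x i)).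
    by rewrite -[(t%:Z)%:~R]/(t%:R : rat) -lam_sum vtx_comb_total addrK.
  split; first by rewrite -subr_ge0 -(ler0z rat) slack mulr_ge0.
  move=> i; rewrite -(ler0z rat) intrD !intrM slack lam_x vtx_comb -!pmulrn.
  have -> : (denom p)%:R * (lam (Some i) - lam None * (nth 0%N p i)%:R) +
      (nth 0%N p i)%:R * (lam None * (denom p)%:R) =
      (denom p)%:R * lam (Some i) :> rat by ring.
  exact: mulr_ge0.
move=> [s_le coord_ge0].
pose l0 : rat := (t%:Z - s)%:~R / (denom p)%:R.
have l0D : l0 * (denom p)%:R = (t%:Z - s)%:~R by rewrite divfK ?pnatr_eq0.
have l0_ge0 : 0 <= l0 by rewrite divr_ge0 // ler0z subr_ge0.
pose lam j := if j is Some i then (x i)%:~R + l0 * (nth 0%N p i)%:R else l0.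
have lam_x i : (x i)%:~R = \sum_j lam j * @vtx p j i by rewrite vtx_comb addrK.
exists lam; split; [case=> [i|] //= | split; last exact: lam_x].
  have := coord_ge0 i; rewrite -(ler0z rat) intrD !intrM -l0D -!pmulrn.
  have -> : (denom p)%:R * (x i)%:~R + (nth 0%N p i)%:R * (l0 * (denom p)%:R) =
     (denom p)%:R * ((x i)%:~R + l0 * (nth 0%N p i)%:R) :> rat by ring.
  by rewrite pmulr_rge0 // ltr0n.
by rewrite vtx_comb_total -(eq_bigr _ (fun i _ => lam_x i)) l0D -rmorph_sum intrB subrK.
Qed.

Local Notation param t := ('I_(denom p) * (size p).-tuple 'I_t.+1)%type.

Definition param_set (t : nat) : {set param t} :=
  [set z : param t | (wnat p z.1 <= t)%N && (tuple_sum z.2 <= t - wnat p z.1)%N].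

(* The level u = (t - w(p,b) - |y|) denom p + b of (b, y); it will be t - sum_i x_i. *)
Definition param_level (t : nat) (z : param t) : nat :=
  ((t - wnat p z.1 - tuple_sum z.2) * denom p + z.1)%N.

Definition param_point (t : nat) (z : param t) (i : 'I_(size p)) : int :=
  (tnth z.2 i)%:Z - ((nth 0%N p i * param_level t z) %/ denom p)%N%:Z.

Lemma param_level_divn (t : nat) (z : param t) :
  (param_level t z %/ denom p = t - wnat p z.1 - tuple_sum z.2)%N.
Proof. by rewrite /param_level divnMDl // divn_small // addn0. Qed.

Lemma param_level_modn (t : nat) (z : param t) : (param_level t z %% denom p)%N = z.1.
Proof. by rewrite /param_level modnMDl modn_small. Qed.

Lemma param_point_sum (t : nat) (z : param t) :
  \sum_i param_point t z i = (tuple_sum z.2)%:Z - (floor_sum p (param_level t z))%:Z.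
Proof.
by rewrite /param_point sumrB tuple_sum_tnth /floor_sum !(big_morph Posz PoszD (erefl _)).
Qed.

Lemma param_slack (t : nat) (z : param t) : z \in param_set t ->
  t%:Z - \sum_i param_point t z i = (param_level t z)%:Z.
Proof.
rewrite inE => /andP [w_le y_le].
have := floor_sum_decomp p (param_level t z).
rewrite param_level_divn param_level_modn => decomp.
rewrite param_point_sum opprB addrA -PoszD subzn; first by congr Posz; lia.
by rewrite (leq_trans (leq_trans y_le (leq_subr _ _))) ?leq_addr.
Qed.

Lemma param_point_in (t : nat) (z : param t) :
  z \in param_set t -> @in_dilate p t (param_point t z).
Proof.
move=> z_in; apply/in_dilateP; split; first by rewrite -subr_ge0 param_slack.
by move=> i; rewrite param_slack // -PoszM ge0_mul_add_divn // subrK.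
Qed.

(* The level, hence b, and then y are recovered from the point. *)
Lemma param_point_inj (t : nat) : {in param_set t &, injective (param_point t)}.
Proof.
move=> [b1 y1] [b2 y2] z1_in z2_in pt_eq.
have level_eq : param_level t (b1, y1) = param_level t (b2, y2).
  by apply/eqP; rewrite -eqz_nat -!param_slack // pt_eq.
have b_eq : b1 = b2.
  apply: val_inj; move: (param_level_modn t (b1, y1)) (param_level_modn t (b2, y2)).
  by rewrite level_eq /= => <- <-.
congr (_, _) => //; apply: eq_from_tnth => i; apply: val_inj.
have := congr1 (fun f => f i) pt_eq; rewrite /param_point level_eq /=.
by move/addIr/eqP; rewrite eqz_nat => /eqP.
Qed.

(* Every lattice point arises: take u = t - sum_i x_i, b = u mod denom p and
   y_i = x_i + floor(p_i u / denom p), which is nonnegative by in_dilateP. *)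
Lemma param_point_surj (t : nat) (x : 'I_(size p) -> int) :
  @in_dilate p t x -> exists2 z, z \in param_set t & param_point t z = x.
Proof.
move=> /in_dilateP [s_le coord_ge0].
set s := \sum_i x i in s_le coord_ge0.
pose u := `|t%:Z - s|%N.
have u_eq : u%:Z = t%:Z - s by rewrite gez0_abs // subr_ge0.
pose y (i : 'I_(size p)) : nat := `|(x i + ((nth 0%N p i * u) %/ denom p)%N%:Z)%R|%N.
have y_eq i : (y i)%:Z = x i + ((nth 0%N p i * u) %/ denom p)%N%:Z.
  by rewrite gez0_abs // -ge0_mul_add_divn // PoszM u_eq.
have sum_y : (\sum_i y i)%:Z = s + (floor_sum p u)%:Z.
  rewrite (big_morph Posz PoszD (erefl _)) (eq_bigr _ (fun i _ => y_eq i)).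
  by rewrite big_split /= -(big_morph Posz PoszD (erefl _)).
have total : (\sum_i y i + u %/ denom p + wnat p (u %% denom p) = t)%N.
  apply/eqP; rewrite -eqz_nat -addnA PoszD sum_y -addrA -PoszD addnA.
  by rewrite floor_sum_decomp u_eq addrC subrK.
have y_lt i : (y i < t.+1)%N.
  by rewrite ltnS (leq_trans (nat_sum_ge y i)) // -total -addnA leq_addr.
pose yt := [tuple (inord (y i) : 'I_t.+1) | i < size p].
have yt_sum : tuple_sum yt = (\sum_i y i)%N.
  by rewrite tuple_sum_tnth; apply: eq_bigr => i _; rewrite tnth_mktuple inordK.
exists (Ordinal (ltn_pmod u (denom_gt0 p)), yt).
  by rewrite inE /= yt_sum -total leq_addl addnK leq_addr.
have level : param_level t (Ordinal (ltn_pmod u (denom_gt0 p)), yt) = u.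
  rewrite /param_level /= yt_sum {3}(divn_eq u (denom p)); congr (_ * _ + _)%N.
  by rewrite -total addnK addKn.
by apply: funext => i; rewrite /param_point level tnth_mktuple inordK // y_eq addrK.
Qed.

(* Grouping the parameters by b gives the Ehrhart count of t Delta_(1,p). *)
Lemma card_param_set (t : nat) : #|param_set t| =
  (\sum_(b < denom p)
     if (wnat p b <= t)%N then 'C(t - wnat p b + size p, size p) else 0)%N.
Proof.
pose in_param (b : 'I_(denom p)) (y : (size p).-tuple 'I_t.+1) :=
  (wnat p b <= t)%N && (tuple_sum y <= t - wnat p b)%N.
rewrite -sum1_card (eq_bigl (fun z => true && in_param z.1 z.2)); last first.
  by move=> z; rewrite inE.
rewrite -(pair_big_dep xpredT in_param (fun _ _ => 1%N)) /=.
apply: eq_bigr => b _; rewrite /in_param.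
case: ifP => [_|_]; last by rewrite big_pred0.
rewrite -(card_tuple_sum_le (size p) t (t - wnat p b) (leq_subr _ _)) -sum1_card.
by apply: eq_bigl => y; rewrite inE.
Qed.

Lemma card_lattice_pts (t : nat) : (@lattice_pts p t #= `I_#|param_set t|)%card.
Proof.
have -> : @lattice_pts p t = param_point t @` [set z | z \in param_set t].
  apply/seteqP; split => [x /= /param_point_surj [z z_in <-]|x [z z_in <-]].
    by exists z.
  exact: param_point_in.
have inj : {in [set z | z \in param_set t] &, injective (param_point t)}.
  by move=> z1 z2; rewrite !in_setE /=; exact: param_point_inj.
exact: card_eq_trans (inj_card_eq inj) (card_finset (param_set t)).
Qed.

Lemma hstar_hpoly : is_hstar p (hpoly p).
Proof.
move=> t; exists #|param_set t|; split; first exact: card_lattice_pts.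
rewrite ehr_sum_hpoly card_param_set (big_morph Posz PoszD (erefl _)).
by apply: eq_bigr => b _; rewrite /ehr_coef; case: ifP.
Qed.

Lemma hstar_unique (h : {poly int}) : is_hstar p h -> h = hpoly p.
Proof.
move=> h_hstar; apply: (ehr_sum_inj (size p)) => t.
have [k [k_card k_eq]] := h_hstar t; have [k' [k'_card k'_eq]] := hstar_hpoly t.
have k_eq_k' : k = k'.
  by apply/card_eq_II; exact: card_eq_trans (card_esym k_card) k'_card.
by rewrite -k_eq -k'_eq k_eq_k'.
Qed.

End LatticePoints.

Section PrependOne.

Variable q : seq nat.
Hypothesis q_pos : all (fun x => 0 < x)%N q.
Hypothesis q_lcm : (1 + sumn q = lcm_seq q - 1)%N.

(* Under the hypothesis, denom (rs1 q) = denom q + 1 is lcm q. *)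
Let dvdn_denom_rs1 (x : nat) : x \in q -> (x %| (denom q).+1)%N.
Proof.
move=> x_in; rewrite (_ : (denom q).+1 = lcm_seq q); first exact: dvdn_lcm_seq.
by rewrite /denom; lia.
Qed.

(* For b <= |q| the entry 1 of rs1 q contributes floor(b / (denom q + 1)) = 0
   and every q_i contributes the same floor as in q (divn_dvd_succ). *)
Lemma wnat_rs1 (b : nat) : (b <= sumn q)%N -> wnat (rs1 q) b = wnat q b.
Proof.
move=> b_le; rewrite /wnat -!floor_sum_seq big_cons /= mul1n.
rewrite divn_small ?ltnS ?(leq_trans b_le) ?leq_addl // add0n.
congr (_ - _)%N; apply: eq_big_seq => x x_in; symmetry.
by apply: divn_dvd_succ; [exact: (allP q_pos) | exact: dvdn_denom_rs1 | ].
Qed.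

Lemma wnat_rs1_last : wnat (rs1 q) (denom q) = (size q).+1.
Proof.
rewrite /wnat -floor_sum_seq big_cons /= mul1n divn_small // add0n.
have -> : (\sum_(x <- q) (x * denom q) %/ (denom q).+1 = \sum_(x <- q) (x - 1))%N.
  apply: eq_big_seq => x x_in; apply: divn_mul_succ.
  by rewrite (allP q_pos) //= dvdn_leq // dvdn_denom_rs1.
by have := sumn_pred q q_pos; rewrite /denom; lia.
Qed.

Lemma hpoly_rs1 : hpoly (rs1 q) = hpoly q + 'X^((size q).+1).
Proof.
rewrite !hpolyE; change (denom (rs1 q)) with (denom q).+1.
rewrite big_ord_recr /= wnat_rs1_last; congr (_ + _); apply: eq_bigr => b _.
by rewrite wnat_rs1 // -ltnS; exact: ltn_ord.
Qed.

End PrependOne.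

Theorem theorem5p5 (q : seq nat) :
  all (fun x => 0 < x)%N q ->
  sorted leq q ->
  (1 + sumn q = lcm_seq q - 1)%N ->
  (forall b : nat, (b <= sumn q)%N -> w q b = w (rs1 q) b) /\
  (forall h1 h2 : {poly int}, is_hstar q h1 -> is_hstar (rs1 q) h2 ->
     h2 = (h1 + 'X^((size q).+1))%R).
Proof.
move=> q_pos _ q_lcm; split.
  by move=> b b_le; rewrite !w_wnat wnat_rs1.
move=> h1 h2 /hstar_unique -> /hstar_unique ->.
exact: hpoly_rs1.
Qed.
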